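(* Fix $\gamma\in\Gamma$ and an edge $l\in\mathcal E$. Consider the cascade with initial demand $d=e_1+\varepsilon\gamma$ (so node $1$ has the largest demand) in which edge $l$ fails first. Then there is $\varepsilon_0>0$ such that the cascade sequence (the sets of edges failing at each step) and the final graph $\mathcal G^{(\mathrm{end})}$ are the same for all $0<\varepsilon<\varepsilon_0$.
   Context: $\mathcal G=(\mathcal N,\mathcal E)$ is a simple connected graph with nodes $\{1,\dots,n\}$, $m$ edges with orientations chosen so that $Vd\ge0$ for small $\varepsilon$, incidence matrix $C$ ($C_{e,i}=1$ if $e$ enters $i$, $-1$ if it leaves $i$, else $0$), PTDF matrix $V=C(C^TC)^+$, $e$ all-ones, $\lambda\in(0,1)$, $\lambda^*\ge\lambda$. $\Gamma=\{\gamma\in\mathbb R^n:\gamma_1=0,\gamma\ge0,e^T\gamma=1\}$. $g^*(d)$ is the unique minimizer of $\frac12\sum_ig_i^2$ over $g\ge0$ with $e^Tg=e^Td$ and $-\lambda|Vd|\le V(d-g)\le\lambda|Vd|$. Cascade: emergency limits $F=\lambda^*|Vd|$. Start with $\mathcal G^{(1)}=\mathcal G$, $d^{(1)}=d$, $g^{(1)}=g^*(d)$; the first failing edge is removed. Whenever $\mathcal G^{(r+1)}$ (node set $\mathcal N$, surviving edges $\mathcal E^{(r+1)}$) is obtained by removing edges, for each connected component with node set $\mathcal N_{\mathcal C}$ put $\theta=\sum_{\mathcal N_{\mathcal C}}d^{(r)}_i/\sum_{\mathcal N_{\mathcal C}}g^{(r)}_i$; if $\theta\ge1$ set $d^{(r+1)}_i=d^{(r)}_i/\theta$,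 $g^{(r+1)}_i=g^{(r)}_i$, and if $\theta\le1$ set $d^{(r+1)}_i=d^{(r)}_i$, $g^{(r+1)}_i=\theta g^{(r)}_i$ on $\mathcal N_{\mathcal C}$. Flows $f^{(r+1)}=V^{(r+1)}(d^{(r+1)}-g^{(r+1)})$ with $V^{(r+1)}$ the PTDF matrix of $\mathcal G^{(r+1)}$ (incidence matrix with removed rows zeroed); relative exceedances $\psi^{(r+1)}_e=|f^{(r+1)}_e|/F_e$, $e\in\mathcal E^{(r+1)}$. If none exceeds $1$ the cascade stops; otherwise the edges $T(\mathcal M)$ fail, where $\mathcal M$ is the set of maximizers of $\psi^{(r+1)}$ and $T:2^{\mathcal E}\to2^{\mathcal E}$ is a fixed deterministic tie-breaking rule with $\emptyset\ne T(\mathcal M)\subseteq\mathcal M$. $\mathcal G^{(\mathrm{end})}$ is the graph when the cascade stops. *)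

From HB Require Import structures.
From mathcomp Require Import all_boot all_order all_algebra.
From mathcomp Require Import boolp reals constructive_ereal.
From mathcomp Require classical_sets.
Set Implicit Arguments. Unset Strict Implicit. Unset Printing Implicit Defensive.
Import Order.TTheory GRing.Theory Num.Theory.
Local Open Scope ring_scope.

Section Cascade.
Variables (R : realType) (n m : nat).
(* nodes are 'I_n.+1 (node "1" of the paper is ord0); edges are 'I_m;
   edge e is oriented from src e to tgt e *)
Variables (src tgt : 'I_m -> 'I_n.+1).

Definition simple_graph : Prop :=
  (forall e, src e != tgt e) /\
  (forall e e', ((src e == src e') && (tgt e == tgt e'))
                || ((src e == tgt e') && (tgt e == src e')) -> e = e').

Definition adjS (S : {set 'I_m}) : rel 'I_n.+1 :=
  fun i j => [exists e in S, ((src e == i) && (tgt e == j))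
                             || ((src e == j) && (tgt e == i))].

Definition connected_graph : Prop := forall i j, connect (adjS setT) i j.

Definition comp (S : {set 'I_m}) (i : 'I_n.+1) : {set 'I_n.+1} :=
  [set j | connect (adjS S) i j].

Definition incidence : 'M[R]_(m, n.+1) :=
  \matrix_(e, i) ((tgt e == i)%:R - (src e == i)%:R).

Definition incidenceS (S : {set 'I_m}) : 'M[R]_(m, n.+1) :=
  \matrix_(e, i) (if e \in S then incidence e i else 0).

Definition penrose (p q : nat) (A : 'M[R]_(p, q)) (X : 'M[R]_(q, p)) : Prop :=
  [/\ A *m X *m A = A, X *m A *m X = X,
      (A *m X)^T = A *m X & (X *m A)^T = X *m A].
Definition pinv (p q : nat) (A : 'M[R]_(p, q)) : 'M[R]_(q, p) :=
  classical_sets.xget 0 (penrose A).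

Definition ptdf (S : {set 'I_m}) : 'M[R]_(m, n.+1) :=
  incidenceS S *m pinv ((incidenceS S)^T *m incidenceS S).

Definition absv (p : nat) (v : 'cV[R]_p) : 'cV[R]_p := map_mx (fun x => `|x|) v.

Definition gfeasible (lam : R) (d g : 'cV[R]_n.+1) : Prop :=
  [/\ forall i, 0 <= g i 0,
      \sum_i g i 0 = \sum_i d i 0 &
      forall e, - (lam * `|(ptdf setT *m d) e 0|) <= (ptdf setT *m (d - g)) e 0
                <= lam * `|(ptdf setT *m d) e 0| ].

Definition gobj (g : 'cV[R]_n.+1) : R := 2^-1 * \sum_i (g i 0) ^+ 2.

Definition gstar (lam : R) (d : 'cV[R]_n.+1) : 'cV[R]_n.+1 :=
  classical_sets.xget 0 (fun g => gfeasible lam d g /\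
                   forall g', gfeasible lam d g' -> gobj g <= gobj g').

(* proportional rebalancing on each component of the graph with edges S *)
Definition comp_sums (S : {set 'I_m}) (d g : 'cV[R]_n.+1) (i : 'I_n.+1) : R * R :=
  (\sum_(j in comp S i) d j 0, \sum_(j in comp S i) g j 0).

Definition rebal_d (S : {set 'I_m}) (d g : 'cV[R]_n.+1) : 'cV[R]_n.+1 :=
  \col_i (let: (sd, sg) := comp_sums S d g i in
          if sg == 0 then (if sd == 0 then d i 0 else 0)   (* theta = +oo *)
          else let theta := sd / sg in
               if 1 <= theta then d i 0 / theta else d i 0).

Definition rebal_g (S : {set 'I_m}) (d g : 'cV[R]_n.+1) : 'cV[R]_n.+1 :=
  \col_i (let: (sd, sg) := comp_sums S d g i in
          if sg == 0 then g i 0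
          else let theta := sd / sg in
               if 1 <= theta then g i 0 else theta * g i 0).

(* relative exceedance |f_e| / F_e, in the extended reals (x/0 = +oo for x>0) *)
Definition psi (F f : 'cV[R]_m) (e : 'I_m) : \bar R :=
  if F e 0 == 0 then (if f e 0 == 0 then 0%E else +oo%E)
  else (`|f e 0| / F e 0)%:E.

Variable (T : {set 'I_m} -> {set 'I_m}).  (* tie-breaking rule *)
Variable (F : 'cV[R]_m).

(* Each step removes >= 1 edge, so fuel m suffices. *)
Fixpoint cascade_from (fuel : nat) (S Fail : {set 'I_m}) (d g : 'cV[R]_n.+1)
  : seq {set 'I_m} * {set 'I_m} :=
  let S' := S :\: Fail in
  let d' := rebal_d S' d g in
  let g' := rebal_g S' d g in
  let f := ptdf S' *m (d' - g') in
  if [forall e in S', (psi F f e <= 1%:E)%E] then ([:: Fail], S')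
  else match fuel with
       | 0 => ([:: Fail], S')
       | fuel'.+1 =>
         let M := [set e in S' | [forall e' in S', (psi F f e' <= psi F f e)%E]] in
         let r := cascade_from fuel' S' (T M) d' g' in
         (Fail :: r.1, r.2)
       end.

End Cascade.

Definition cascade (R : realType) (n m : nat) (src tgt : 'I_m -> 'I_n.+1)
  (lam lamS : R) (T : {set 'I_m} -> {set 'I_m}) (l : 'I_m) (d : 'cV[R]_n.+1)
  : seq {set 'I_m} * {set 'I_m} :=
  let V := @ptdf R n m src tgt setT in
  let F := lamS *: absv (V *m d) in
  @cascade_from R n m src tgt T F m setT [set l] d (@gstar R n m src tgt lam d).

Definition in_Gamma (R : realType) (n : nat) (gam : 'cV[R]_n.+1) : Prop :=
  [/\ gam ord0 0 = 0, forall i, 0 <= gam i 0 & \sum_i gam i 0 = 1].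

Definition demand (R : realType) (n : nat) (gam : 'cV[R]_n.+1) (eps : R) : 'cV[R]_n.+1 :=
  \col_i ((i == ord0)%:R) + eps *: gam.

From Pilot Require Import Defs.
From HB Require Import structures.
From mathcomp Require Import all_boot all_order all_algebra.
From mathcomp Require Import boolp reals constructive_ereal.
From mathcomp Require classical_sets.
From mathcomp Require Import ring lra zify.
Import Order.TTheory GRing.Theory Num.Theory.
Local Open Scope ring_scope.
Set Implicit Arguments. Unset Strict Implicit. Unset Printing Implicit Defensive.

(* As eps -> 0+, every quantity the cascade computes from d = e_1 + eps gamma is
   eventually a rational function of eps: it is built by field operations,
   absolute values and case distinctions on signs of such functions.  A nonzero
   rational function has a constant sign on some interval (0, eps0), so every
   case distinction -- and with it the sequence of failing edge sets and the
   final edge set -- is eventually constant.  The one implicit step is g*(d), the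
   least-norm point of a polyhedron {g | A g <= b(d)}: it is the least-norm
   solution A_J^T (A_J A_J^T)^+ b_J of the equations of some active set J (an
   active-set descent shows such a candidate is optimal), each candidate is
   linear in b(d), and which of the finitely many candidates is optimal is again
   decided by signs of rational functions. *)

Section Germs.
Variable R : realType.

Definition near0 (P : R -> Prop) : Prop :=
  exists2 e : R, 0 < e & forall x, 0 < x < e -> P x.

Lemma near0W (P Q : R -> Prop) : (forall x, P x -> Q x) -> near0 P -> near0 Q.
Proof. by move=> PQ [e e0 He]; exists e => // x /He /PQ. Qed.

Lemma always_near0 (P : R -> Prop) : (forall x, P x) -> near0 P.
Proof. by move=> HP; exists 1. Qed.

Lemma near0_pos : near0 (fun x => 0 < x).
Proof. by exists 1 => // x /andP[]. Qed.

Lemma near0_and (P Q : R -> Prop) : near0 P -> near0 Q -> near0 (fun x => P x /\ Q x).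
Proof.
move=> [e1 e1p H1] [e2 e2p H2]; exists (Num.min e1 e2); first by rewrite lt_min e1p.
move=> x /andP[x0]; rewrite lt_min => /andP[xe1 xe2].
by split; [apply: H1 | apply: H2]; rewrite x0.
Qed.

Lemma near0_witness (P : R -> Prop) : near0 P -> exists2 x, 0 < x & P x.
Proof. by move=> [e e0 He]; exists (e / 2); [lra | apply: He; lra]. Qed.

Lemma near0_forall (I : finType) (P : I -> R -> Prop) :
  (forall i, near0 (P i)) -> near0 (fun x => forall i, P i x).
Proof.
move=> HP; suff: near0 (fun x => forall i, i \in enum I -> P i x).
  by apply: near0W => x Hx i; apply: Hx; rewrite mem_enum.
elim: (enum I) => [|i s IH]; first exact: always_near0.
apply: near0W (near0_and (HP i) IH) => x [Pi Ps] j.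
by rewrite inE => /orP[/eqP-> | /Ps].
Qed.

Definition germ_const (T : eqType) (b : R -> T) : Prop :=
  exists c : T, near0 (fun x => b x = c).

Lemma germ_const_cst (T : eqType) (c : T) : germ_const (fun _ => c).
Proof. by exists c; apply: always_near0. Qed.

Lemma germ_const_near (T : eqType) (a b : R -> T) :
  near0 (fun x => a x = b x) -> germ_const b -> germ_const a.
Proof. by move=> Hab [c Hc]; exists c; apply: near0W (near0_and Hab Hc) => x [-> ->]. Qed.

Lemma germ_const_ext (T : eqType) (a b : R -> T) :
  (forall x, a x = b x) -> germ_const b -> germ_const a.
Proof. by move/always_near0; apply: germ_const_near. Qed.

Lemma germ_const_map (T U : eqType) (h : T -> U) (b : R -> T) :
  germ_const b -> germ_const (fun x => h (b x)).
Proof. by move=> [c Hc]; exists (h c); apply: near0W Hc => x ->. Qed.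

Lemma germ_const_pair (T U : eqType) (a : R -> T) (b : R -> U) :
  germ_const a -> germ_const b -> germ_const (fun x => (a x, b x)).
Proof.
by move=> [c Hc] [d Hd]; exists (c, d); apply: near0W (near0_and Hc Hd) => x [-> ->].
Qed.

Lemma germ_const_ffun (I : finType) (T : eqType) (b : I -> R -> T) :
  (forall i, germ_const (b i)) -> germ_const (fun x => [ffun i => b i x]).
Proof.
move=> /fin_all_exists[c Hc]; exists [ffun i => c i].
by apply: near0W (near0_forall Hc) => x Hx; apply/ffunP => i; rewrite !ffunE.
Qed.

Lemma germ_const_forall (I : finType) (b : I -> R -> bool) :
  (forall i, germ_const (b i)) -> germ_const (fun x => [forall i, b i x]).
Proof.
move/germ_const_ffun/(germ_const_map (fun f : {ffun I -> bool} => [forall i, f i])).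
by apply: germ_const_ext => x; apply: eq_forallb => i; rewrite ffunE.
Qed.

Lemma germ_const_set (I : finType) (A : {pred I}) (b : I -> R -> bool) :
  (forall i, germ_const (b i)) -> germ_const (fun x => [set i in A | b i x]).
Proof.
move/germ_const_ffun/(germ_const_map (fun f : {ffun I -> bool} => [set i in A | f i])).
by apply: germ_const_ext => x; apply/setP => i; rewrite !inE ffunE.
Qed.

Lemma poly_bounded_unit (p : {poly R}) :
  exists2 B, 0 <= B & forall x, `|x| <= 1 -> `|p.[x]| <= B.
Proof.
elim/poly_ind: p => [|p c [B B0 HB]].
  by exists 0 => // x _; rewrite horner0 normr0.
exists (B + `|c|) => [|x x1]; first by rewrite addr_ge0.
rewrite hornerMXaddC; apply: le_trans (ler_normD _ _) _; rewrite lerD2r normrM.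
by have := HB x x1; have := normr_ge0 p.[x]; nra.
Qed.

(* The constant term dominates near 0, or else factor out X. *)
Lemma poly_sign_near0 (p : {poly R}) :
  p != 0 -> near0 (fun x => 0 < p.[x]) \/ near0 (fun x => p.[x] < 0).
Proof.
elim/poly_ind: p => [|p c IH]; first by rewrite eqxx.
have [-> pX0|c0 _] := eqVneq c 0.
  rewrite addr0 in pX0 *; have /IH : p != 0 by apply: contraNneq pX0 => ->; rewrite mul0r.
  by case=> H; [left | right]; apply: near0W (near0_and near0_pos H) => x [x0 Hx];
     rewrite hornerMX ?mulr_gt0 ?pmulr_llt0.
have [B B0 HB] := poly_bounded_unit p.
have c_gt0 : 0 < `|c| by rewrite normr_gt0.
have small : near0 (fun x => `|p.[x] * x| < `|c|).
  exists (Num.min 1 (`|c| / (B + 1))); first by rewrite lt_min ltr01 divr_gt0 //; lra.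
  move=> x /andP[x0]; rewrite lt_min => /andP[x1 xc].
  have pB : `|p.[x]| <= B by apply: HB; rewrite ger0_norm; lra.
  rewrite ltr_pdivlMr in xc; last lra.
  by rewrite normrM (ger0_norm (ltW x0)); have := normr_ge0 p.[x]; nra.
have [cpos|cneg] := ltP 0 c; [left | right]; apply: near0W small => x;
  rewrite hornerMXaddC ?(gtr0_norm cpos) ?(ler0_norm cneg) => small;
  have := ler_norm (p.[x] * x); have := ler_norm (- (p.[x] * x)); rewrite normrN; lra.
Qed.

Definition germ_rational (f : R -> R) : Prop :=
  exists p q : {poly R}, q != 0 /\ near0 (fun x => f x = p.[x] / q.[x]).

Lemma near0_horner_neq0 (q : {poly R}) : q != 0 -> near0 (fun x => q.[x] != 0).
Proof.
by move=> /poly_sign_near0[]; apply: near0W => x qx; rewrite ?(gt_eqF qx) ?(lt_eqF qx).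
Qed.

Lemma germ_rational_near (f g : R -> R) :
  near0 (fun x => f x = g x) -> germ_rational g -> germ_rational f.
Proof.
move=> Hfg [p [q [q0 Hq]]]; exists p, q; split => //.
by apply: near0W (near0_and Hfg Hq) => x [-> ->].
Qed.

Lemma germ_rational_ext (f g : R -> R) :
  (forall x, f x = g x) -> germ_rational g -> germ_rational f.
Proof. by move/always_near0; apply: germ_rational_near. Qed.

Lemma germ_rational_cst (c : R) : germ_rational (fun _ => c).
Proof.
exists c%:P, 1; split; first exact: oner_neq0.
by apply: always_near0 => x; rewrite !hornerC divr1.
Qed.

Lemma germ_rational_id : germ_rational id.
Proof.
exists 'X, 1; split; first exact: oner_neq0.
by apply: always_near0 => x; rewrite hornerX hornerC divr1.
Qed.

Lemma germ_rationalM (f g : R -> R) :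
  germ_rational f -> germ_rational g -> germ_rational (fun x => f x * g x).
Proof.
move=> [p1 [q1 [q10 H1]]] [p2 [q2 [q20 H2]]]; exists (p1 * p2), (q1 * q2).
split; first by rewrite mulf_neq0.
by apply: near0W (near0_and H1 H2) => x [-> ->]; rewrite !hornerM invfM; ring.
Qed.

Lemma germ_rationalV (f : R -> R) : germ_rational f -> germ_rational (fun x => (f x)^-1).
Proof.
move=> [p [q [q0 H]]]; have [p0|p0] := eqVneq p 0.
  apply: germ_rational_near (germ_rational_cst 0); apply: near0W H => x ->.
  by rewrite p0 horner0 mul0r invr0.
by exists q, p; split => //; apply: near0W H => x ->; rewrite invf_div.
Qed.

Lemma germ_rationalD (f g : R -> R) :
  germ_rational f -> germ_rational g -> germ_rational (fun x => f x + g x).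
Proof.
move=> [p1 [q1 [q10 H1]]] [p2 [q2 [q20 H2]]]; exists (p1 * q2 + p2 * q1), (q1 * q2).
split; first by rewrite mulf_neq0.
have Hq := near0_and (near0_horner_neq0 q10) (near0_horner_neq0 q20).
by apply: near0W (near0_and (near0_and H1 H2) Hq) => x [[-> ->] [nz1 nz2]];
  rewrite !hornerE; field; rewrite nz1 nz2.
Qed.

Lemma germ_rationalN (f : R -> R) : germ_rational f -> germ_rational (fun x => - f x).
Proof.
by move/(germ_rationalM (germ_rational_cst (-1))); apply: germ_rational_ext => x; ring.
Qed.

Lemma germ_rationalB (f g : R -> R) :
  germ_rational f -> germ_rational g -> germ_rational (fun x => f x - g x).
Proof. by move=> Hf /germ_rationalN; apply: germ_rationalD. Qed.

Lemma germ_rational_div (f g : R -> R) :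
  germ_rational f -> germ_rational g -> germ_rational (fun x => f x / g x).
Proof. by move=> Hf /germ_rationalV; apply: germ_rationalM. Qed.

Lemma germ_rational_sum (I : Type) (r : seq I) (P : pred I) (F : I -> R -> R) :
  (forall i, germ_rational (F i)) -> germ_rational (fun x => \sum_(i <- r | P i) F i x).
Proof.
move=> HF; elim: r => [|i r IH].
  by apply: germ_rational_ext (germ_rational_cst 0) => x; rewrite big_nil.
case Pi: (P i);
  [apply: germ_rational_ext (germ_rationalD (HF i) IH) | apply: germ_rational_ext IH];
  by move=> x; rewrite big_cons Pi.
Qed.

Lemma germ_rational_sign (f : R -> R) : germ_rational f ->
  [\/ near0 (fun x => f x = 0), near0 (fun x => 0 < f x) | near0 (fun x => f x < 0)].
Proof.
move=> [p [q [q0 H]]]; have [p0|p0] := eqVneq p 0.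
  by apply: Or31; apply: near0W H => x ->; rewrite p0 horner0 mul0r.
have signs := near0_and H (near0_and _ _).
case: (poly_sign_near0 p0) => Hp; case: (poly_sign_near0 q0) => Hq;
  [apply: Or32 | apply: Or33 | apply: Or33 | apply: Or32];
  apply: near0W (signs _ _ Hp Hq) => x [-> [px qx]].
- by rewrite divr_gt0.
- by rewrite pmulr_rlt0 // invr_lt0.
- by rewrite nmulr_rlt0 // invr_gt0.
- by rewrite nmulr_rgt0 // invr_lt0.
Qed.

Lemma germ_const_le (f g : R -> R) :
  germ_rational f -> germ_rational g -> germ_const (fun x => f x <= g x).
Proof.
move=> Hf Hg; case: (germ_rational_sign (germ_rationalB Hg Hf)) => H.
- by exists true; apply: near0W H => x /eqP; rewrite subr_eq0 => /eqP ->; rewrite lexx.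
- by exists true; apply: near0W H => x; rewrite subr_gt0 => /ltW.
- by exists false; apply: near0W H => x; rewrite subr_lt0 => /lt_geF.
Qed.

Lemma germ_const_eq (f g : R -> R) :
  germ_rational f -> germ_rational g -> germ_const (fun x => f x == g x).
Proof.
move=> Hf Hg.
have := germ_const_pair (germ_const_le Hf Hg) (germ_const_le Hg Hf).
move/(germ_const_map (fun p => p.1 && p.2)).
by apply: germ_const_ext => x; rewrite eq_le.
Qed.

Lemma germ_rational_if (b : R -> bool) (f g : R -> R) : germ_const b ->
  germ_rational f -> germ_rational g -> germ_rational (fun x => if b x then f x else g x).
Proof.
by move=> [[] Hb] Hf Hg; [apply: germ_rational_near Hf | apply: germ_rational_near Hg];
  apply: near0W Hb => x ->.
Qed.

Lemma germ_rational_norm (f : R -> R) : germ_rational f -> germ_rational (fun x => `|f x|).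
Proof.
move=> Hf; have := germ_rational_if (germ_const_le (germ_rational_cst 0) Hf) Hf (germ_rationalN Hf).
apply: germ_rational_ext => x; case: ifP => [/ger0_norm // | /negbT].
by rewrite -ltNge => /ltr0_norm.
Qed.

Definition germ_erational (h : R -> \bar R) : Prop :=
  near0 (fun x => h x = +oo%E) \/
  exists2 f, germ_rational f & near0 (fun x => h x = (f x)%:E).

Lemma germ_erational_fin (f : R -> R) : germ_rational f -> germ_erational (fun x => (f x)%:E).
Proof. by move=> Hf; right; exists f => //; apply: always_near0. Qed.

Lemma germ_erational_if (b : R -> bool) (h1 h2 : R -> \bar R) : germ_const b ->
  germ_erational h1 -> germ_erational h2 -> germ_erational (fun x => if b x then h1 x else h2 x).
Proof.
move=> [c Hb] H1 H2; have : germ_erational (if c then h1 else h2) by case: (c).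
case=> [H | [f Hf H]]; [left | right; exists f => //];
  by apply: near0W (near0_and Hb H) => x [-> <-]; case: (c).
Qed.

Lemma germ_const_lee (h1 h2 : R -> \bar R) :
  germ_erational h1 -> germ_erational h2 -> germ_const (fun x => (h1 x <= h2 x)%E).
Proof.
move=> H1 [H2 | [f2 Hf2 H2]].
  by exists true; apply: near0W H2 => x ->; rewrite leey.
case: H1 => [H1 | [f1 Hf1 H1]].
  by exists false; apply: near0W (near0_and H1 H2) => x [-> ->].
apply: germ_const_near (germ_const_le Hf1 Hf2).
by apply: near0W (near0_and H1 H2) => x [-> ->]; rewrite lee_fin.
Qed.

Definition germ_rationalv p (v : R -> 'cV[R]_p) : Prop :=
  forall i, germ_rational (fun x => v x i 0).

Lemma germ_rationalv_cst p (v : 'cV[R]_p) : germ_rationalv (fun _ => v).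
Proof. by move=> i; apply: germ_rational_cst. Qed.

Lemma germ_rationalv_const_mx p (f : R -> R) :
  germ_rational f -> germ_rationalv (fun x => (const_mx (f x) : 'cV[R]_p)).
Proof. by move=> Hf i; apply: germ_rational_ext Hf => x; rewrite mxE. Qed.

Lemma germ_rationalvD p (u v : R -> 'cV[R]_p) :
  germ_rationalv u -> germ_rationalv v -> germ_rationalv (fun x => u x + v x).
Proof.
by move=> Hu Hv i; apply: germ_rational_ext (germ_rationalD (Hu i) (Hv i)) => x; rewrite mxE.
Qed.

Lemma germ_rationalvB p (u v : R -> 'cV[R]_p) :
  germ_rationalv u -> germ_rationalv v -> germ_rationalv (fun x => u x - v x).
Proof.
by move=> Hu Hv i; apply: germ_rational_ext (germ_rationalB (Hu i) (Hv i)) => x; rewrite !mxE.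
Qed.

Lemma germ_rationalvZ p c (u : R -> 'cV[R]_p) :
  germ_rationalv u -> germ_rationalv (fun x => c *: u x).
Proof.
move=> Hu i; have := germ_rationalM (germ_rational_cst c) (Hu i).
by apply: germ_rational_ext => x; rewrite mxE.
Qed.

Lemma germ_rationalv_absv p (u : R -> 'cV[R]_p) :
  germ_rationalv u -> germ_rationalv (fun x => absv (u x)).
Proof. by move=> Hu i; apply: germ_rational_ext (germ_rational_norm (Hu i)) => x; rewrite mxE. Qed.

Lemma germ_rationalv_mul p q (A : 'M[R]_(p, q)) v :
  germ_rationalv v -> germ_rationalv (fun x => A *m v x).
Proof.
move=> Hv i; have := germ_rational_sum (index_enum _) predT
  (fun j => germ_rationalM (germ_rational_cst (A i j)) (Hv j)).
by apply: germ_rational_ext => x; rewrite mxE.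
Qed.

Lemma germ_rationalv_col_mx p q (u : R -> 'cV[R]_p) (v : R -> 'cV[R]_q) :
  germ_rationalv u -> germ_rationalv v -> germ_rationalv (fun x => col_mx (u x) (v x)).
Proof.
move=> Hu Hv i; rewrite -[i]splitK; case: (fintype.split i) => j /=.
  by apply: germ_rational_ext (Hu j) => x; rewrite col_mxEu.
by apply: germ_rational_ext (Hv j) => x; rewrite col_mxEd.
Qed.

End Germs.

Section CascadeGerm.
Variables (R : realType) (n m : nat) (src tgt : 'I_m -> 'I_n.+1).
Variables (T : {set 'I_m} -> {set 'I_m}) (F : R -> 'cV[R]_m).
Hypothesis germF : germ_rationalv F.

Lemma germ_erational_psi (f : R -> 'cV[R]_m) e :
  germ_rationalv f -> germ_erational (fun x => psi (F x) (f x) e).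
Proof.
move=> germf; have zero := germ_rational_cst (R:=R) 0.
apply: germ_erational_if (germ_const_eq (germF e) zero) _
  (germ_erational_fin (germ_rational_div (germ_rational_norm (germf e)) (germF e))).
apply: germ_erational_if (germ_const_eq (germf e) zero) (germ_erational_fin zero) _.
by left; apply: always_near0.
Qed.

Lemma germ_rational_comp_sum S (v : R -> 'cV[R]_n.+1) i : germ_rationalv v ->
  germ_rational (fun x => \sum_(j in Defs.comp src tgt S i) v x j 0).
Proof. by move=> germv; apply: germ_rational_sum. Qed.

Lemma germ_rationalv_rebal_d S (d g : R -> 'cV[R]_n.+1) : germ_rationalv d -> germ_rationalv g ->
  germ_rationalv (fun x => rebal_d src tgt S (d x) (g x)).
Proof.
move=> germd germg i; have zero := germ_rational_cst (R:=R) 0.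
have sd := germ_rational_comp_sum S i germd; have sg := germ_rational_comp_sum S i germg.
have theta := germ_rational_div sd sg.
have := germ_rational_if (germ_const_eq sg zero)
  (germ_rational_if (germ_const_eq sd zero) (germd i) zero)
  (germ_rational_if (germ_const_le (germ_rational_cst 1) theta)
     (germ_rational_div (germd i) theta) (germd i)).
by apply: germ_rational_ext => x; rewrite mxE.
Qed.

Lemma germ_rationalv_rebal_g S (d g : R -> 'cV[R]_n.+1) : germ_rationalv d -> germ_rationalv g ->
  germ_rationalv (fun x => rebal_g src tgt S (d x) (g x)).
Proof.
move=> germd germg i; have zero := germ_rational_cst (R:=R) 0.
have sd := germ_rational_comp_sum S i germd; have sg := germ_rational_comp_sum S i germg.
have theta := germ_rational_div sd sg.
have := germ_rational_if (germ_const_eq sg zero) (germg i)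
  (germ_rational_if (germ_const_le (germ_rational_cst 1) theta)
     (germg i) (germ_rationalM theta (germg i))).
by apply: germ_rational_ext => x; rewrite mxE.
Qed.

(* Each round of the cascade only inspects finitely many sign conditions. *)
Lemma germ_const_cascade_from fuel S Fail (d g : R -> 'cV[R]_n.+1) :
  germ_rationalv d -> germ_rationalv g ->
  germ_const (fun x => cascade_from src tgt T (F x) fuel S Fail (d x) (g x)).
Proof.
elim: fuel S Fail d g => [|fuel IH] S Fail d g germd germg.
  by exists ([:: Fail], S :\: Fail); apply: always_near0 => x /=; case: ifP.
set S' := S :\: Fail.
have germd' := germ_rationalv_rebal_d S' germd germg.
have germg' := germ_rationalv_rebal_g S' germd germg.
have germf := germ_rationalv_mul (ptdf R src tgt S') (germ_rationalvB germd' germg').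
have psi_le e e' := germ_const_lee (germ_erational_psi e' germf) (germ_erational_psi e germf).
have [stop Hstop] := germ_const_forall (fun e =>
  germ_const_map (implb (e \in S')) (germ_const_lee (germ_erational_psi e germf)
                                       (germ_erational_fin (germ_rational_cst 1)))).
have [M HM] := germ_const_set (mem S') (fun e =>
  germ_const_forall (fun e' => germ_const_map (implb (e' \in S')) (psi_le e e'))).
have [r Hr] := IH S' (T M) _ _ germd' germg'.
exists (if stop then ([:: Fail], S') else (Fail :: r.1, r.2)).
apply: near0W (near0_and Hstop (near0_and HM Hr)) => x [/= -> [-> ->]].
by case: (stop).
Qed.

End CascadeGerm.

Section LeastNorm.
Variable R : realType.

Lemma mulmx_trmx_eq0 p q (M : 'M[R]_(p, q)) : M *m M^T = 0 -> M = 0.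
Proof.
move=> MMt0; apply/matrixP => i j; rewrite [RHS]mxE.
have /eqP := congr1 (fun B : 'M_p => B i i) MMt0.
rewrite !mxE psumr_eq0; last by move=> l _; rewrite mxE -expr2 sqr_ge0.
by move=> /allP /(_ j (mem_index_enum _)); rewrite mxE -expr2 sqrf_eq0 => /eqP.
Qed.

Lemma mxrank_mul_trmx p q (B : 'M[R]_(p, q)) : \rank (B *m B^T) = \rank B.
Proof.
apply/eqP; rewrite eqn_leq mxrankM_maxl /=.
have /mxrankS : (kermx (B *m B^T) <= kermx B)%MS.
  rewrite sub_kermx; apply/eqP/mulmx_trmx_eq0.
  by rewrite trmx_mul !mulmxA -(mulmxA _ B) mulmx_ker mul0mx.
by rewrite !mxrank_ker; have := rank_leq_row (B *m B^T); have := rank_leq_row B; lia.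
Qed.

Lemma trmx_sub_mul_trmx p q (B : 'M[R]_(p, q)) : (B^T <= B *m B^T)%MS.
Proof.
by rewrite -(mxrank_leqif_sup (submxMl B B^T)).2 mxrank_tr mxrank_mul_trmx.
Qed.

Variables (k N : nat) (A : 'M[R]_(k, N)).

Definition feasible (b : 'cV[R]_k) (g : 'cV[R]_N) : Prop :=
  forall i, (A *m g) i 0 <= b i 0.

Definition feasibleb (b : 'cV[R]_k) (g : 'cV[R]_N) : bool :=
  [forall i, (A *m g) i 0 <= b i 0].

Lemma feasibleP b g : reflect (feasible b g) (feasibleb b g).
Proof. exact: forallP. Qed.

Definition sqnorm (g : 'cV[R]_N) : R := \sum_i g i 0 ^+ 2.

Lemma sqnorm_ge0 g : 0 <= sqnorm g.
Proof. by apply: sumr_ge0 => i _; rewrite sqr_ge0. Qed.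

Lemma sqnormD u v : sqnorm (u + v) = sqnorm u + 2 * (u^T *m v) 0 0 + sqnorm v.
Proof.
rewrite /sqnorm mxE mulr_sumr -!big_split; apply: eq_bigr => i _ /=; rewrite !mxE; ring.
Qed.

Lemma sqnorm_convex g h t : 0 <= t <= 1 ->
  sqnorm (g + t *: (h - g)) <= (1 - t) * sqnorm g + t * sqnorm h.
Proof.
move=> /andP[t0 t1]; rewrite /sqnorm !mulr_sumr -big_split /=; apply: ler_sum => i _.
rewrite !mxE; have : 0 <= t * (1 - t) * (g i 0 - h i 0) ^+ 2.
  by apply: mulr_ge0; [apply: mulr_ge0 | apply: sqr_ge0]; lra.
nra.
Qed.

Definition active_rows (J : {set 'I_k}) : 'M[R]_(k, N) :=
  \matrix_(i, j) (if i \in J then A i j else 0).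

Definition active_rhs (J : {set 'I_k}) (b : 'cV[R]_k) : 'cV[R]_k :=
  \col_i (if i \in J then b i 0 else 0).

(* [A_J^T (A_J A_J^T)^+ b_J], written with MathComp's row-space pseudo-inverse *)
Definition min_norm_sol (J : {set 'I_k}) (b : 'cV[R]_k) : 'cV[R]_N :=
  ((active_rhs J b)^T *m pinvmx (active_rows J *m (active_rows J)^T) *m active_rows J)^T.

Lemma active_rows_mul J (g : 'cV[R]_N) i :
  (active_rows J *m g) i 0 = if i \in J then (A *m g) i 0 else 0.
Proof.
rewrite !mxE; case: ifP => iJ; first by apply: eq_bigr => j _; rewrite mxE iJ.
by apply: big1 => j _; rewrite mxE iJ mul0r.
Qed.

(* The solution lies in the row space of A_J and g minus it in the kernel of A_J. *)
Lemma min_norm_solP J b g : active_rows J *m g = active_rhs J b ->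
  active_rows J *m min_norm_sol J b = active_rhs J b /\
  sqnorm (min_norm_sol J b) <= sqnorm g.
Proof.
set AJ := active_rows J; set bJ := active_rhs J b; set M := AJ *m AJ^T => solves_g.
have bJ_sub : (bJ^T <= M)%MS.
  by rewrite -solves_g trmx_mul; apply: submx_trans (submxMl _ _) (trmx_sub_mul_trmx AJ).
set y := bJ^T *m pinvmx M.
set h := min_norm_sol J b.
have h_def : h = AJ^T *m y^T by rewrite /h /min_norm_sol trmx_mul.
have solves_h : AJ *m h = bJ.
  rewrite h_def mulmxA -/M -[LHS]trmxK trmx_mul trmxK.
  have -> : M^T = M by rewrite /M trmx_mul trmxK.
  by rewrite /y mulmxKpV // trmxK.
split => //; have -> : g = h + (g - h) by rewrite addrC subrK.
rewrite sqnormD; have -> : (h^T *m (g - h)) 0 0 = 0.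
  by rewrite {1}h_def trmx_mul !trmxK -mulmxA mulmxBr solves_g solves_h subrr mulmx0 mxE.
by have := sqnorm_ge0 (g - h); lra.
Qed.

Definition slack (b : 'cV[R]_k) (g : 'cV[R]_N) : {set 'I_k} :=
  [set i | (A *m g) i 0 != b i 0].

Lemma active_rows_tight b g :
  active_rows (~: slack b g) *m g = active_rhs (~: slack b g) b.
Proof.
apply/matrixP => i j; rewrite ord1 active_rows_mul [RHS]mxE.
by case: ifP => //; rewrite !inE negbK => /eqP.
Qed.

Lemma mulmx_segment (g h : 'cV[R]_N) t i :
  (A *m (g + t *: (h - g))) i 0 = (A *m g) i 0 + t * ((A *m h) i 0 - (A *m g) i 0).
Proof. by rewrite mulmxDr -scalemxAr mulmxBr !mxE. Qed.

(* Walk from g towards h until the first slack constraint violated by h becomes tight. *)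
Lemma line_search b g h : feasible b g ->
  (forall i, i \notin slack b g -> (A *m h) i 0 = b i 0) -> ~ feasible b h ->
  exists2 t, 0 < t < 1 &
    feasible b (g + t *: (h - g)) /\ slack b (g + t *: (h - g)) \proper slack b g.
Proof.
move=> feas_g tight_h /(introN (feasibleP b h)) /forallPn[i0]; rewrite -ltNge => i0_bad.
set bad := [set i | b i 0 < (A *m h) i 0].
have bad_slack i : i \in bad -> i \in slack b g.
  by rewrite inE => ibad; apply: contraLR ibad => /tight_h ->; rewrite ltxx.
have bad_lt i : i \in bad -> (A *m g) i 0 < b i 0.
  by move/bad_slack; rewrite inE lt_neqAle => ->; apply: feas_g.
set ratio := fun i => (b i 0 - (A *m g) i 0) / ((A *m h) i 0 - (A *m g) i 0).
have ratioK i : i \in bad ->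
    ratio i * ((A *m h) i 0 - (A *m g) i 0) = b i 0 - (A *m g) i 0.
  move=> ibad; have := bad_lt i ibad; rewrite inE in ibad => g_lt_b.
  by rewrite /ratio divfK //; apply: lt0r_neq0; lra.
have ratio01 i : i \in bad -> 0 < ratio i < 1.
  move=> ibad; have := bad_lt i ibad; rewrite inE in ibad => g_lt_b.
  have h_sub_g : 0 < (A *m h) i 0 - (A *m g) i 0 by lra.
  have b_sub_g : 0 < b i 0 - (A *m g) i 0 by lra.
  by rewrite /ratio divr_gt0 //= ltr_pdivrMr // mul1r; lra.
have i0bad : i0 \in bad by rewrite inE.
have [i1 i1bad i1min] := arg_minP ratio i0bad.
exists (ratio i1); first exact: ratio01; split.
- move=> i; rewrite mulmx_segment; have := feas_g i.
  case: (boolP (i \in bad)) => ibad.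
    have := ratioK i ibad; have := i1min i ibad; have := bad_lt i ibad.
    rewrite inE in ibad; nra.
  have := ratio01 i1 i1bad; rewrite inE -leNgt in ibad; nra.
- apply/properP; split.
    apply/subsetP => i; rewrite !inE; apply: contraNN => /eqP tight_g.
    by rewrite mulmx_segment tight_g tight_h ?inE ?tight_g ?eqxx // subrr mulr0 addr0.
  exists i1; first exact: bad_slack.
  by rewrite inE mulmx_segment negbK ratioK // addrC subrK.
Qed.

Lemma descent_step b g : feasible b g ->
  feasible b (min_norm_sol (~: slack b g) b) \/
  exists g', [/\ feasible b g', sqnorm g' <= sqnorm g & slack b g' \proper slack b g].
Proof.
move=> feas_g; have [solves_h norm_h] := min_norm_solP (active_rows_tight b g).
set h := min_norm_sol _ b in solves_h norm_h *.
have [/feasibleP feas_h | /feasibleP infeas_h] := boolP (feasibleb b h); first by left.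
have tight_h i : i \notin slack b g -> (A *m h) i 0 = b i 0.
  move=> islack; have := congr1 (fun v : 'cV_k => v i 0) solves_h.
  by rewrite /= active_rows_mul [RHS]mxE inE islack.
have [t t01 [feas_t proper_t]] := line_search feas_g tight_h infeas_h.
right; exists (g + t *: (h - g)); split => //.
have /andP[t0 t1] := t01.
have /(sqnorm_convex g h) : 0 <= t <= 1 by rewrite !ltW.
nra.
Qed.

Lemma exists_min_norm_sol_below b g : feasible b g ->
  exists J, feasible b (min_norm_sol J b) /\ sqnorm (min_norm_sol J b) <= sqnorm g.
Proof.
have [c] := ubnP #|slack b g|; elim: c g => // c IH g slack_c feas_g.
have [feas_h | [g' [feas_g' norm_g' proper_g']]] := descent_step feas_g.
  by exists (~: slack b g); split => //; apply: (min_norm_solP (active_rows_tight b g)).2.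
have [|J [feas_J norm_J]] := IH g' _ feas_g'; first by have := proper_card proper_g'; lia.
by exists J; split => //; apply: le_trans norm_J norm_g'.
Qed.

Definition is_min_norm (b : 'cV[R]_k) (g : 'cV[R]_N) : Prop :=
  feasible b g /\ forall g', feasible b g' -> sqnorm g <= sqnorm g'.

Lemma feasible_midpoint b g1 g2 :
  feasible b g1 -> feasible b g2 -> feasible b (2^-1 *: (g1 + g2)).
Proof.
move=> feas1 feas2 i; rewrite -scalemxAr mulmxDr !mxE.
by have := feas1 i; have := feas2 i; rewrite !mxE; lra.
Qed.

(* Parallelogram identity: the midpoint of two minimizers is shorter unless they coincide. *)
Lemma is_min_norm_unique b g1 g2 : is_min_norm b g1 -> is_min_norm b g2 -> g1 = g2.
Proof.
move=> [feas1 min1] [feas2 min2]; have feas_mid := feasible_midpoint feas1 feas2.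
have mid : 4 * sqnorm (2^-1 *: (g1 + g2)) = 2 * sqnorm g1 + 2 * sqnorm g2 - sqnorm (g1 - g2).
  rewrite /sqnorm !mulr_sumr -!big_split -sumrB /=; apply: eq_bigr => i _; rewrite !mxE.
  by field.
have := min1 _ feas_mid; have := min2 _ feas_mid; have := min1 _ feas2; have := min2 _ feas1.
have := sqnorm_ge0 (g1 - g2) => ? ? ? ? ?.
have : sqnorm (g1 - g2) == 0 by apply/eqP; lra.
rewrite psumr_eq0; last by move=> i _; rewrite sqr_ge0.
move=> /allP zero; apply/matrixP => i j; rewrite ord1.
by have := zero i (mem_index_enum _); rewrite /= sqrf_eq0 !mxE subr_eq0 => /eqP.
Qed.

Definition opt_active_set (b : 'cV[R]_k) (J : {set 'I_k}) : bool :=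
  feasibleb b (min_norm_sol J b) &&
  [forall J', feasibleb b (min_norm_sol J' b) ==>
              (sqnorm (min_norm_sol J b) <= sqnorm (min_norm_sol J' b))].

Lemma opt_active_set_exists b g : feasible b g -> exists J, opt_active_set b J.
Proof.
move=> /exists_min_norm_sol_below[J0 [/feasibleP feas0 _]].
have [J feasJ minJ] := @arg_minP _ _ _ J0 (fun J => feasibleb b (min_norm_sol J b))
  (fun J => sqnorm (min_norm_sol J b)) feas0.
by exists J; rewrite /opt_active_set feasJ; apply/forallP => J'; apply/implyP/minJ.
Qed.

Lemma opt_active_setP b J : opt_active_set b J -> is_min_norm b (min_norm_sol J b).
Proof.
move=> /andP[/feasibleP feasJ /forallP minJ]; split => // g' /exists_min_norm_sol_below.
move=> [J' [/feasibleP feasJ' normJ']].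
exact: le_trans (implyP (minJ J') feasJ') normJ'.
Qed.

Lemma germ_rationalv_min_norm_sol J (b : R -> 'cV[R]_k) :
  germ_rationalv b -> germ_rationalv (fun x => min_norm_sol J (b x)).
Proof.
move=> germb; have germbJ : germ_rationalv (fun x => active_rhs J (b x)).
  move=> i; have := germ_rational_if (germ_const_cst R (i \in J)) (germb i) (germ_rational_cst 0).
  by apply: germ_rational_ext => x; rewrite mxE.
set P := pinvmx (active_rows J *m (active_rows J)^T) *m active_rows J.
move=> i; apply: germ_rational_ext (germ_rationalv_mul P^T germbJ i) => x.
by rewrite /min_norm_sol -mulmxA trmx_mul trmxK.
Qed.

Lemma germ_rational_sqnorm (g : R -> 'cV[R]_N) :
  germ_rationalv g -> germ_rational (fun x => sqnorm (g x)).
Proof.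
move=> germg; have := germ_rational_sum (index_enum _) predT
  (fun i => germ_rationalM (germg i) (germg i)).
by apply: germ_rational_ext => x; apply: eq_bigr => i _; rewrite expr2.
Qed.

Lemma germ_const_opt_active_set J (b : R -> 'cV[R]_k) :
  germ_rationalv b -> germ_const (fun x => opt_active_set (b x) J).
Proof.
move=> germb; have germ_sol J' := germ_rationalv_min_norm_sol J' germb.
have feas J' : germ_const (fun x => feasibleb (b x) (min_norm_sol J' (b x))).
  by apply: germ_const_forall => i; apply: germ_const_le (germ_rationalv_mul A (germ_sol J') i) _.
have norm_le J' :=
  germ_const_le (germ_rational_sqnorm (germ_sol J)) (germ_rational_sqnorm (germ_sol J')).
have := germ_const_pair (feas J) (germ_const_forall (fun J' =>
  germ_const_map (fun p => p.1 ==> p.2) (germ_const_pair (feas J') (norm_le J')))).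
by move/(germ_const_map (fun p => p.1 && p.2)); apply: germ_const_ext.
Qed.

End LeastNorm.

Section GenerationProblem.
Variables (R : realType) (n m : nat) (src tgt : 'I_m -> 'I_n.+1) (lam : R).
Local Notation V := (ptdf R src tgt setT).

(* The constraints g >= 0, sum g = sum d (as two inequalities) and the flow bounds
   on V (d - g), stacked as a single system [Amat *m g <= bvec d]. *)
Definition Amat : 'M[R]_(n.+1 + (1 + (1 + (m + m))), n.+1) :=
  col_mx (- 1%:M) (col_mx (const_mx 1) (col_mx (- const_mx 1) (col_mx V (- V)))).

Definition bvec (d : 'cV[R]_n.+1) : 'cV[R]_(n.+1 + (1 + (1 + (m + m)))) :=
  col_mx 0 (col_mx (const_mx (\sum_i d i 0)) (col_mx (const_mx (- \sum_i d i 0))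
    (col_mx (lam *: absv (V *m d) + V *m d) (lam *: absv (V *m d) - V *m d)))).

Lemma feasible_col_mx p1 p2 (A1 : 'M[R]_(p1, n.+1)) (A2 : 'M[R]_(p2, n.+1)) b1 b2 g :
  feasible (col_mx A1 A2) (col_mx b1 b2) g <-> feasible A1 b1 g /\ feasible A2 b2 g.
Proof.
rewrite /feasible mul_col_mx; split => [H | [H1 H2] i].
  by split => i; [have := H (lshift _ i) | have := H (rshift _ i)];
    rewrite ?col_mxEu ?col_mxEd.
by rewrite -[i]splitK; case: (fintype.split i) => j /=; rewrite ?col_mxEu ?col_mxEd.
Qed.

Lemma const_mx1_mul (g : 'cV[R]_n.+1) i : ((const_mx 1 : 'rV_n.+1) *m g) i 0 = \sum_j g j 0.
Proof. by rewrite mxE; apply: eq_bigr => j _; rewrite mxE mul1r. Qed.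

Lemma gfeasibleE d g : gfeasible src tgt lam d g <-> feasible Amat (bvec d) g.
Proof.
rewrite /gfeasible /Amat /bvec !feasible_col_mx /feasible mulmxBr !mulNmx mul1mx.
set Vd := V *m d; set Vg := V *m g; set sg := const_mx 1 *m g.
have sgE i : sg i 0 = \sum_j g j 0 by apply: const_mx1_mul.
split => [[g_ge0 sum_g flow_g] | [g_ge0 [sum_le [sum_ge [flow_le flow_ge]]]]].
- split; first by move=> i; rewrite !mxE oppr_le0.
  split; first by move=> i; rewrite sgE mxE sum_g.
  split; first by move=> i; rewrite mxE sgE mxE sum_g.
  by split => e; have := flow_g e; rewrite !mxE; lra.
- split.
  + by move=> i; have := g_ge0 i; rewrite !mxE oppr_le0.
  + by have := sum_le 0; have := sum_ge 0; rewrite mxE !sgE !mxE; lra.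
  + by move=> e; have := flow_le e; have := flow_ge e; rewrite !mxE; lra.
Qed.

Lemma gfeasible_self (d : 'cV[R]_n.+1) :
  0 <= lam -> (forall i, 0 <= d i 0) -> gfeasible src tgt lam d d.
Proof.
move=> lam_ge0 d_ge0; split=> // e.
have -> : (V *m (d - d)) e 0 = 0 by rewrite subrr mulmx0 mxE.
by rewrite oppr_le0 andbb mulr_ge0.
Qed.

Lemma gstar_min_norm_sol d J : opt_active_set Amat (bvec d) J ->
  gstar src tgt lam d = min_norm_sol Amat J (bvec d).
Proof.
move=> /opt_active_setP optJ; apply: (is_min_norm_unique _ optJ).
set P := fun g => gfeasible src tgt lam d g /\
                  forall g', gfeasible src tgt lam d g' -> gobj g <= gobj g'.
have gobj_le (g1 g2 : 'cV[R]_n.+1) : (gobj g1 <= gobj g2) = (sqnorm g1 <= sqnorm g2).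
  by rewrite /gobj ler_pM2l // invr_gt0.
have [/gfeasibleE feas min] : P (gstar src tgt lam d).
  apply: (classical_sets.xgetPex 0 (ex_intro P (min_norm_sol Amat J (bvec d)) _)).
  case: optJ => /gfeasibleE feasJ minJ; split => // g' /gfeasibleE.
  by rewrite gobj_le; apply: minJ.
by split => // g' /gfeasibleE /min; rewrite gobj_le.
Qed.

Lemma germ_rationalv_demand (gam : 'cV[R]_n.+1) : germ_rationalv (demand gam).
Proof.
move=> i; have := germ_rationalD (germ_rational_cst ((i == ord0)%:R : R))
  (germ_rationalM (germ_rational_id R) (germ_rational_cst (gam i 0))).
by apply: germ_rational_ext => x; rewrite !mxE.
Qed.

Lemma germ_rationalv_gstar (gam : 'cV[R]_n.+1) : 0 <= lam -> (forall i, 0 <= gam i 0) ->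
  germ_rationalv (fun x => gstar src tgt lam (demand gam x)).
Proof.
move=> lam_ge0 gam_ge0; have germ_d := germ_rationalv_demand gam.
have germ_Vd := germ_rationalv_mul V germ_d.
have germ_sum : germ_rational (fun x => \sum_i demand gam x i 0).
  by apply: germ_rational_sum => i; apply: germ_d.
have germ_b : germ_rationalv (fun x => bvec (demand gam x)).
  apply: germ_rationalv_col_mx; first exact: germ_rationalv_cst.
  apply: germ_rationalv_col_mx; first exact: germ_rationalv_const_mx.
  apply: germ_rationalv_col_mx; first exact: germ_rationalv_const_mx (germ_rationalN germ_sum).
  have germ_lVd := germ_rationalvZ lam (germ_rationalv_absv germ_Vd).
  by apply: germ_rationalv_col_mx; [apply: germ_rationalvD | apply: germ_rationalvB].
have /fin_all_exists[opt opt_near] := fun J => germ_const_opt_active_set Amat J germ_b.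
have [J optJ | no_opt] := pickP opt.
  move=> i; apply: germ_rational_near (germ_rationalv_min_norm_sol Amat J germ_b i).
  by apply: near0W (opt_near J) => x optJx; rewrite (gstar_min_norm_sol (J := J)) // optJx.
have [x x_gt0 opt_x] := near0_witness (near0_forall opt_near).
have d_ge0 i : 0 <= demand gam x i 0.
  by rewrite !mxE addr_ge0 ?ler0n // mulr_ge0 // ltW.
have [J] := opt_active_set_exists (proj1 (gfeasibleE _ _) (gfeasible_self lam_ge0 d_ge0)).
by rewrite opt_x no_opt.
Qed.

End GenerationProblem.

Theorem mainTheorem8 (R : realType) (n m : nat) (src tgt : 'I_m -> 'I_n.+1)
  (lam lamS : R) (T : {set 'I_m} -> {set 'I_m}) (gam : 'cV[R]_n.+1) (l : 'I_m) :
  @simple_graph n m src tgt -> @connected_graph n m src tgt ->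
  0 < lam < 1 -> lam <= lamS ->
  (forall M : {set 'I_m}, M != set0 -> T M != set0 /\ T M \subset M) ->
  in_Gamma gam ->
  (exists2 e1 : R, 0 < e1 & forall eps, 0 < eps < e1 ->
     forall e, 0 <= (@ptdf R n m src tgt setT *m demand gam eps) e 0) ->
  exists2 eps0 : R, 0 < eps0 &
    forall eps1 eps2, 0 < eps1 < eps0 -> 0 < eps2 < eps0 ->
      cascade src tgt lam lamS T l (demand gam eps1)
      = cascade src tgt lam lamS T l (demand gam eps2).
Proof.
move=> _ _ /andP[lam_gt0 _] _ _ [_ gam_ge0 _] _.
have germ_d := germ_rationalv_demand gam.
have germ_F : germ_rationalv (fun x => lamS *: absv (ptdf R src tgt setT *m demand gam x)).
  exact: germ_rationalvZ (germ_rationalv_absv (germ_rationalv_mul _ germ_d)).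
have germ_g := germ_rationalv_gstar src tgt (ltW lam_gt0) gam_ge0.
have [c [eps0 eps0_gt0 const_c]] :=
  germ_const_cascade_from src tgt T germ_F m setT [set l] germ_d germ_g.
by exists eps0 => // eps1 eps2 /const_c + /const_c; rewrite /cascade => -> ->.
Qed.
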